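(* Let $H:\mathbb{R}_+\to[0,1]$ be a measurable function with $\|H\|_1:=\int_0^\infty H(x)\,dx<\infty$ and $\|H\|_2^2:=\int_0^\infty H(x)^2\,dx<\|H\|_1$. Fix $\tau>0$, $\alpha>0$, and a positive integer $L$; set $R_L=\ln(\tau L)/(2\|H\|_1)$. Let $\mathcal{P}_L$ be a Poisson point process of unit intensity on the torus $[0,L]$ (with $0$ and $L$ identified), with circular distance $\rho^L(x,y)=\min\{|x-y|,L-|x-y|\}$, and let $\tilde h^L(x,y)=H(\rho^L(x,y)/R_L)\mathbb{1}\{\rho^L(x,y)\le R_L^{1+1/\alpha}\}$. Let $\mathcal{G}_{\tilde h^L}(\mathcal{P}_L)$ be the random graph on vertex set $\mathcal{P}_L$ in which, conditionally on $\mathcal{P}_L$, each pair of distinct nodes $x,y$ is joined by an edge with probability $\tilde h^L(x,y)$, independently over pairs, and let $\widetilde N_{\mathrm{iso}}$ be its number of isolated nodes. For $m\in\mathbb{N}$, divide the torus into $mL$ segments $A_i=[(i-1)/m,i/m)$, $i\in\Gamma=\{1,\dots,mL\}$, and let $I_i$ be the indicator that $A_i$ contains exactly one node of $\mathcal{P}_L$ and that node is isolated in $\mathcal{G}_{\tilde h^L}(\mathcal{P}_L)$. Let $W_{m,L}=\sum_{i\in\Gamma}I_i$. Then, for fixed $L$, $$d_{TV}(\widetilde N_{\mathrm{iso}},W_{m,L})\to 0\quad\text{as } m\to\infty.$$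
   Context: $d_{TV}(X,Y)$ denotes the total variation distance between the distributions of $X$ and $Y$. The paper assumes $L$ is an integer for convenience of the discretisation. *)

From HB Require Import structures.
From mathcomp Require Import all_boot all_order all_algebra.
From mathcomp Require Import all_classical all_reals all_analysis.
Set Implicit Arguments. Unset Strict Implicit. Unset Printing Implicit Defensive.
Import Order.TTheory GRing.Theory Num.Theory.
Import numFieldNormedType.Exports.
Local Open Scope classical_set_scope.
Local Open Scope ring_scope.

Section Model.
Variable R : realType.
Local Notation mu := (@lebesgue_measure R).

Definition rhoL (L x y : R) : R := Num.min `|x - y| (L - `|x - y|).

Definition H1norm (H : R -> R) : R :=
  fine (\int[mu]_(x in `[0%R, +oo[%classic) (H x)%:E)%E.
Definition RL (H : R -> R) (tau L : R) : R := ln (tau * L) / (2 * H1norm H).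
Definition htilde (H : R -> R) (tau alpha L : R) (x y : R) : R :=
  H (rhoL L x y / RL H tau L)
  * (if rhoL L x y <= RL H tau L `^ (1 + alpha^-1) then 1 else 0).

(* Given n points (a sequence s, of which entries 0..n-1 are used),
   a graph is an edge set E of pairs (i,j) with i < j. *)
Definition upper (n : nat) : {set 'I_n * 'I_n} := [set p : 'I_n * 'I_n | (p.1 < p.2)%N].

Definition edge_weight (h : R -> R -> R) (n : nat) (s : seq R)
  (E : {set 'I_n * 'I_n}) : R :=
  \prod_(p in upper n)
     (if p \in E then h (nth 0%R s p.1) (nth 0%R s p.2)
      else 1 - h (nth 0%R s p.1) (nth 0%R s p.2)).

Definition adjacent (n : nat) (E : {set 'I_n * 'I_n}) (i j : 'I_n) : bool :=
  ((i, j) \in E) || ((j, i) \in E).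

Definition isolated (n : nat) (E : {set 'I_n * 'I_n}) (i : 'I_n) : bool :=
  [forall j, (j != i) ==> ~~ adjacent E i j].

Definition Niso (n : nat) (s : seq R) (E : {set 'I_n * 'I_n}) : nat :=
  #|[set i | isolated E i]|.

(* W_{m,L}: segments A_i = [i/m, (i+1)/m), i = 0, ..., mL-1 (0-based) *)
Definition in_seg (m : nat) (k : nat) (x : R) : bool :=
  (k%:R / m%:R <= x) && (x < k.+1%:R / m%:R).

Definition Iseg (m : nat) (n : nat) (s : seq R) (E : {set 'I_n * 'I_n})
  (k : nat) : bool :=
  (#|[set j : 'I_n | in_seg m k (nth 0%R s j)]| == 1)%N &&
  [forall j : 'I_n, in_seg m k (nth 0%R s j) ==> isolated E j].

Definition Wml (m L : nat) (n : nat) (s : seq R) (E : {set 'I_n * 'I_n}) : nat :=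
  \sum_(k < m * L) Iseg m s E k.

Fixpoint iint (L : R) (n : nat) (F : seq R -> \bar R) : \bar R :=
  match n with
  | 0 => F [::]
  | n'.+1 => (\int[mu]_(x in `[0%R, L[%classic) iint L n' (fun s => F (x :: s)))%E
  end.

(* Probability of an event ev(n, points, edge set) for the model:
   P_L = Poisson process of unit intensity on the torus [0,L):
   N ~ Poisson(L), given N = n the points are iid uniform on [0,L);
   given the points, edges independent with probabilities h. *)
Definition model_prob (L : R) (h : R -> R -> R)
  (ev : forall n : nat, seq R -> {set 'I_n * 'I_n} -> bool) : \bar R :=
  (\sum_(0 <= n <oo)
     ((expR (- L) * L ^+ n / n`!%:R * L ^- n)%:E *
      iint L n (fun s => (\sum_(E in {set 'I_n * 'I_n} | E \subset upper n)
                            edge_weight h s E * (ev n s E)%:R)%:E)))%E.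

Definition dTV_nat (P Q : set nat -> \bar R) : R :=
  sup [set `|fine (P A) - fine (Q A)| | A in [set: set nat]].

End Model.

From Pilot Require Import Defs.
From HB Require Import structures.
From mathcomp Require Import all_boot all_order all_algebra.
From mathcomp Require Import all_classical all_reals all_analysis.
From mathcomp Require Import measurable_realfun.
From mathcomp Require Import ring lra zify.
Set Implicit Arguments. Unset Strict Implicit. Unset Printing Implicit Defensive.
Import Order.TTheory GRing.Theory Num.Theory.
Import numFieldNormedType.Exports.
Import HBNNSimple.
Local Open Scope classical_set_scope.
Local Open Scope ring_scope.

(* If no segment A_k contains two points of the configuration, then I_k is
   exactly the indicator that A_k holds an isolated node, so W_{m,L} equals
   the number of isolated nodes whatever the edges are.  Hence for every A,
   |P(N_iso in A) - P(W_{m,L} in A)| is at most the probability that some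
   segment holds two points.  Given n points this is at most
   n^2 * mL * (1/m)^2, and averaging over the Poisson(L) law of n (with the
   crude bound n^2 <= 3^n) gives d_TV <= L e^(2L) / m. *)

Section nonneg_integral.
Context d (T : measurableType d) (R : realType) (mu : {measure set T -> \bar R}).
Local Open Scope ereal_scope.

Lemma ge0_integral_le (D : set T) (f g : T -> \bar R) :
  (forall x, D x -> 0 <= f x) -> (forall x, D x -> f x <= g x) ->
  \int[mu]_(x in D) f x <= \int[mu]_(x in D) g x.
Proof.
move=> f0 fg.
have g0 x : D x -> 0 <= g x by move=> Dx; exact: le_trans (f0 x Dx) (fg x Dx).
rewrite !ge0_integralE //; apply: ereal_sup_le => _ [k /= kf <-]; exists k => //= x.
apply: le_trans (kf x) _; rewrite /patch; case: ifP => // /[!inE] Dx; exact: fg.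
Qed.

Lemma ge0_integralD_le (D : set T) (f g : T -> \bar R) : measurable D ->
  (forall x, D x -> 0 <= f x) -> (forall x, D x -> 0 <= g x) ->
  measurable_fun D g ->
  \int[mu]_(x in D) (f x + g x) <= \int[mu]_(x in D) f x + \int[mu]_(x in D) g x.
Proof.
move=> mD f0 g0 mg.
have fg0 x : D x -> 0 <= f x + g x by move=> Dx; rewrite adde_ge0 ?f0 ?g0.
rewrite ge0_integralE //; apply: ge_ereal_sup => _ [k /= kfg <-].
set F := f \_ D; set G := g \_ D.
have F0 x : 0 <= F x by rewrite /F /patch; case: ifP => // /[!inE]; exact: f0.
have G0 x : 0 <= G x by rewrite /G /patch; case: ifP => // /[!inE]; exact: g0.
have mG : measurable_fun setT G by exact/(measurable_restrictT _ _).1.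
have Gfin x : G x != +oo -> G x \is a fin_num.
  by move=> Gx; rewrite fin_numE Gx andbT; apply: contraTneq (G0 x) => ->.
have kFG x : (k x)%:E <= F x + G x.
  by apply: le_trans (kfg x) _; rewrite /F /G /patch; case: ifP => //; rewrite adde0.
(* F need not be measurable: compare k with the measurable minorant [k - G]^+ of F. *)
pose k' x := maxe ((k x)%:E - G x) 0.
have mk' : measurable_fun setT k'.
  apply: measurable_maxe; last exact: measurable_cst.
  apply: emeasurable_funB => //; apply/measurable_EFinP; exact: measurable_funTS.
have k'0 x : 0 <= k' x by rewrite /k' le_max lexx orbT.
have k'F x : k' x <= F x.
  rewrite /k' ge_max F0 andbT.
  have [->|/Gfin Gx] := eqVneq (G x) +oo; last by rewrite leeBlDr // addeC.
  by rewrite /= addeNy (le_trans _ (F0 x)) ?leNye.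
have kk'G x : (k x)%:E <= k' x + G x.
  have [->|/Gfin Gx] := eqVneq (G x) +oo.
    by rewrite addey ?leey // gt_eqF // (lt_le_trans _ (k'0 x)) ?ltNy0.
  rewrite /k' maxEle; case: ifPn => kG; first by rewrite -leeBlDr.
  by rewrite subeK.
rewrite -integralT_nnsfun.
apply: (@le_trans _ _ (\int[mu]_x (k' x + G x))).
  apply: ge0_le_integral => //.
  - by move=> x _; rewrite lee_fin; exact: fun_ge0.
  - by apply/measurable_EFinP; exact: measurable_funP.
  - exact: emeasurable_funD.
rewrite ge0_integralD // [X in _ <= X + _]integral_mkcond [X in _ <= _ + X]integral_mkcond.
by apply: leeD => //; apply: ge0_integral_le.
Qed.

End nonneg_integral.

Section iterated_integral.
Context (R : realType) (L : R) (L_gt0 : 0 < L).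
Local Notation mu := (@lebesgue_measure R).
Local Open Scope ereal_scope.
Let D : set R := `[0%R, L[%classic.
Let mD : measurable D. Proof. exact: measurable_itv. Qed.
Let muD : mu D = L%:E.
Proof. by rewrite /D lebesgue_measure_itv /= lte_fin L_gt0 sube0. Qed.

Definition in_torus (s : seq R) := all (fun x => (0 <= x)%R && (x < L)%R) s.

Lemma in_torus_cons x s : D x -> in_torus s -> in_torus (x :: s).
Proof. by rewrite /D /= in_itv /= => Dx ds; rewrite /in_torus /= Dx. Qed.

Lemma iint_ge0 n F : (forall s, in_torus s -> 0 <= F s) -> 0 <= iint L n F.
Proof.
elim: n F => [|n IH] F F0 /=; first exact: F0.
apply: integral_ge0 => x Dx; apply: IH => s ds; apply: F0; exact: in_torus_cons.
Qed.

Lemma iint_le n F G : (forall s, in_torus s -> 0 <= F s) ->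
  (forall s, in_torus s -> F s <= G s) -> iint L n F <= iint L n G.
Proof.
elim: n F G => [|n IH] F G F0 FG /=; first exact: FG.
apply: ge0_integral_le => x Dx.
  apply: iint_ge0 => s ds; apply: F0; exact: in_torus_cons.
by apply: IH => s ds; [apply: F0 | apply: FG]; exact: in_torus_cons.
Qed.

Lemma integral_cst_torus (c : R) : \int[mu]_(x in D) c%:E = (c * L)%:E.
Proof.
have := integral_cst mu mD c%:E; rewrite /cst => ->.
by rewrite [X in _ * X = _](_ : _ = L%:E) ?EFinM //; exact: muD.
Qed.

Lemma iint_cst n (c : R) : iint L n (fun _ => c%:E) = (c * L ^+ n)%:E.
Proof.
elim: n => [|n IH] /=; first by rewrite expr0 mulr1.
by rewrite IH integral_cst_torus exprSr mulrA.
Qed.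

Fixpoint iint_measurable (n : nat) (G : seq R -> \bar R) : Prop :=
  match n with
  | 0 => True
  | n'.+1 => measurable_fun D (fun x => iint L n' (fun s => G (x :: s)))
             /\ forall x, iint_measurable n' (fun s => G (x :: s))
  end.

Lemma iint_measurable_cst n c : iint_measurable n (fun _ => c).
Proof. by elim: n => [|n IH] //=; split => //; exact: measurable_cst. Qed.

Lemma iintD_le n F G : (forall s, in_torus s -> 0 <= F s) ->
  (forall s, in_torus s -> 0 <= G s) -> iint_measurable n G ->
  iint L n (fun s => F s + G s) <= iint L n F + iint L n G.
Proof.
elim: n F G => [|n IH] F G F0 G0 //= [mG mGs].
have F0x x : D x -> forall s, in_torus s -> 0 <= F (x :: s).
  by move=> Dx s ds; apply: F0; exact: in_torus_cons.
have G0x x : D x -> forall s, in_torus s -> 0 <= G (x :: s).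
  by move=> Dx s ds; apply: G0; exact: in_torus_cons.
apply: (@le_trans _ _ (\int[mu]_(x in D) (iint L n (fun s => F (x :: s)) +
                                           iint L n (fun s => G (x :: s))))).
  apply: ge0_integral_le => x Dx; last by apply: IH; [exact: F0x | exact: G0x | exact: mGs].
  by apply: iint_ge0 => s ds; rewrite adde_ge0 ?F0x ?G0x.
by apply: ge0_integralD_le => // x Dx; apply: iint_ge0; [exact: F0x | exact: G0x].
Qed.

Lemma iintD_sum_le n (I : eqType) (r : seq I) F (g : I -> seq R -> R) :
  (forall s, in_torus s -> 0 <= F s) -> (forall t s, in_torus s -> (0 <= g t s)%R) ->
  (forall t, t \in r -> iint_measurable n (fun s => (g t s)%:E)) ->
  iint L n (fun s => F s + (\sum_(t <- r) g t s)%:E) <=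
  iint L n F + \sum_(t <- r) iint L n (fun s => (g t s)%:E).
Proof.
move=> F0 g0; elim: r F F0 => [|t r IH] F F0 mg.
  rewrite big_nil adde0 (_ : (fun s => _) = F) //.
  by apply: funext => s; rewrite big_nil adde0.
rewrite (_ : (fun s => _) = (fun s => (F s + (g t s)%:E) + (\sum_(t <- r) g t s)%:E)); last first.
  by apply: funext => s; rewrite big_cons EFinD addeA.
apply: le_trans (IH _ _ _) _.
- by move=> s ds; rewrite adde_ge0 ?F0 // lee_fin g0.
- by move=> u ur; apply: mg; rewrite in_cons ur orbT.
rewrite big_cons addeA; apply: leeD => //.
apply: iintD_le => //; last by apply: mg; rewrite in_cons eqxx.
by move=> s ds; rewrite lee_fin; exact: g0.
Qed.

Let indic01 (A : set R) x : (0 <= (\1_A x : R))%R /\ ((\1_A x : R) <= 1)%R.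
Proof. by rewrite indicE; case: (x \in A). Qed.

Let indicM_funE (A : set R) x (G : seq R -> R) :
  (fun s => (\1_A x * G s)%:E) = if x \in A then (fun s => (G s)%:E) else (fun _ => 0%R%:E).
Proof. by apply: funext => s; rewrite indicE; case: (x \in A); rewrite ?mul1r ?mul0r. Qed.

Lemma iint_measurable_indic n k (A : set R) : measurable A ->
  iint_measurable n (fun s => (\1_A (nth 0%R s k))%:E).
Proof.
move=> mA; elim: n k => [|n IH] k //=; case: k => [|k] /=; split.
- rewrite (_ : (fun x => _) = (fun x => (\1_A x * L ^+ n)%:E)); last first.
    by apply: funext => x; rewrite iint_cst.
  by apply/measurable_EFinP; apply: measurable_funM; [exact: measurable_indic | exact: measurable_cst].
- by move=> x; exact: iint_measurable_cst.
- exact: measurable_cst.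
- by move=> x; exact: IH.
Qed.

Lemma iint_measurable_indic2 n i j (A B : set R) : measurable A -> measurable B ->
  (i < j)%N -> iint_measurable n (fun s => (\1_A (nth 0%R s i) * \1_B (nth 0%R s j))%:E).
Proof.
move=> mA mB; elim: n i j => [|n IH] i j ij //=.
case: i ij => [|i]; case: j => [|j] //= ij; split.
- pose K := iint L n (fun s => (\1_B (nth 0%R s j))%:E).
  rewrite (_ : (fun x => _) = (fun x => if x \in A then K else 0)); last first.
    by apply: funext => x; rewrite indicM_funE; case: (x \in A); rewrite ?iint_cst ?mul0r.
  apply: (measurable_fun_if (g := cst K) (h := cst 0) (f := fun x => x \in A) mD).
  + apply: (measurable_fun_bool true) => //.
    rewrite (_ : _ @^-1` _ = A); first exact: measurableI.
    by apply/seteqP; split => x /=; [move=> ?; exact/set_mem | move=> ?; exact/mem_set].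
  + exact: measurable_cst.
  + exact: measurable_cst.
- move=> x; rewrite indicM_funE; case: (x \in A).
    exact: iint_measurable_indic.
  exact: iint_measurable_cst.
- exact: measurable_cst.
- by move=> x; exact: IH.
Qed.

Lemma integral_indicM_le (A : set R) (a c : R) : measurable A -> (0 <= c)%R ->
  mu A <= a%:E -> \int[mu]_(x in D) (\1_A x * c)%:E <= (a * c)%:E.
Proof.
move=> mA c0 muA.
rewrite (_ : (fun x => _) = (fun x => (\1_A x)%:E * c%:E)); last first.
  by apply: funext => x; rewrite EFinM.
rewrite (@ge0_integralZr _ _ _ mu D mD (fun x => (\1_A x)%:E)); first last.
- by rewrite lee_fin.
- by move=> x _; rewrite lee_fin; case: (indic01 A x).
- by apply/measurable_EFinP; exact: measurable_indic.
rewrite integral_indic // EFinM lee_wpmul2r ?lee_fin //.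
by apply: le_trans muA; apply: le_measure; rewrite ?inE //; exact: measurableI.
Qed.

Section iint_indic_le.
Hypothesis L_ge1 : (1 <= L)%R.

Let integral_cst_pow n (c : R) :
  \int[mu]_(x in D) (c * L ^+ n)%:E = (c * L ^+ n.+1)%:E.
Proof. by rewrite integral_cst_torus exprSr mulrA. Qed.

Lemma iint_indic_le n k (A : set R) (a : R) : measurable A -> (0 <= a)%R ->
  mu A <= a%:E -> (k < n)%N ->
  iint L n (fun s => (\1_A (nth 0%R s k))%:E) <= (a * L ^+ n)%:E.
Proof.
move=> mA a0 muA; elim: n k => [|n IH] [|k] //= kn.
- rewrite (_ : (fun x => _) = (fun x => (\1_A x * L ^+ n)%:E)); last first.
    by apply: funext => x; rewrite iint_cst.
  have Ln0 : (0 <= L ^+ n)%R by rewrite exprn_ge0 // ltW.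
  apply: le_trans (integral_indicM_le mA Ln0 muA) _.
  by rewrite lee_fin ler_wpM2l // exprS ler_peMl.
- rewrite -integral_cst_pow.
  apply: ge0_integral_le => y Dy; last exact: IH.
  by apply: iint_ge0 => s _; rewrite lee_fin; exact: (indic01 A _).1.
Qed.

Lemma iint_indic2_le n i j (A B : set R) (a b : R) : measurable A -> measurable B ->
  (0 <= a)%R -> (0 <= b)%R -> mu A <= a%:E -> mu B <= b%:E ->
  (i < j)%N -> (j < n)%N ->
  iint L n (fun s => (\1_A (nth 0%R s i) * \1_B (nth 0%R s j))%:E) <= (a * b * L ^+ n)%:E.
Proof.
move=> mA mB a0 b0 muA muB; elim: n i j => [|n IH] [|i] [|j] //= ij jn.
- have bLn0 : (0 <= b * L ^+ n)%R by rewrite mulr_ge0 // exprn_ge0 // ltW.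
  apply: (@le_trans _ _ (\int[mu]_(x in D) (\1_A x * (b * L ^+ n))%:E)).
    apply: ge0_integral_le => x Dx.
      apply: iint_ge0 => s _; rewrite lee_fin.
      by apply: mulr_ge0; [case: (indic01 A x) | case: (indic01 B (nth 0%R s j))].
    rewrite indicM_funE indicE; case: (x \in A).
      by rewrite mul1r; exact: iint_indic_le.
    by rewrite iint_cst // !mul0r.
  apply: le_trans (integral_indicM_le mA bLn0 muA) _.
  rewrite lee_fin -mulrA ler_wpM2l // ler_wpM2l //.
  by rewrite exprS ler_peMl // exprn_ge0 // ltW.
- rewrite -integral_cst_pow.
  apply: ge0_integral_le => x Dx; last exact: IH.
  apply: iint_ge0 => s _; rewrite lee_fin.
  by apply: mulr_ge0; [case: (indic01 A (nth 0%R s i)) | case: (indic01 B (nth 0%R s j))].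
Qed.

End iint_indic_le.

End iterated_integral.

Lemma card_set_sum (n : nat) (P : pred 'I_n) : #|[set i | P i]%classic| = (\sum_(i < n) P i)%N.
Proof.
rewrite -sum1_card big_mkcond /=; apply: eq_bigr => i _.
by case: (boolP (P i)) => Pi; [rewrite mem_set | rewrite memNset //=; apply/negP].
Qed.

Lemma card_set_finset (n : nat) (P : pred 'I_n) :
  #|[set i | P i]%classic| = #|[set i | P i]%SET|.
Proof.
apply: eq_card => i; rewrite finset.inE.
by case: (boolP (P i)) => Pi; [rewrite mem_set | rewrite memNset //=; apply/negP].
Qed.

Section segments.
Context (R : realType) (m : nat) (m_gt0 : (0 < m)%N).

Lemma in_segE (k : nat) (x : R) : 0 <= x -> in_seg m k x = (Num.truncn (x * m%:R) == k).
Proof.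
move=> x0; have m0 : 0 < m%:R :> R by rewrite ltr0n.
by rewrite /in_seg truncn_eq ?mulr_ge0 // ler_pdivrMr // ltr_pdivlMr.
Qed.

Context (Lnat n : nat) (s : seq R) (E : {set 'I_n * 'I_n}).
Hypothesis s_in_torus : forall j : 'I_n, 0 <= nth 0 s j < Lnat%:R.
Hypothesis no_collision : forall (i j : 'I_n) (k : 'I_(m * Lnat)), (i < j)%N ->
  ~~ (in_seg m k (nth 0 s i) && in_seg m k (nth 0 s j)).

Let seg_of (j : 'I_n) := Num.truncn (nth 0 s j * m%:R).

Let seg_of_lt j : (seg_of j < m * Lnat)%N.
Proof.
have /andP[s0 sL] := s_in_torus j.
by rewrite /seg_of truncn_lt_nat ?mulr_ge0 // natrM mulrC ltr_pM2l ?ltr0n.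
Qed.

Let in_seg_of (k : nat) (j : 'I_n) : in_seg m k (nth 0 s j) = (seg_of j == k).
Proof. by rewrite in_segE //; case/andP: (s_in_torus j). Qed.

Let seg_card_le1 (k : 'I_(m * Lnat)) :
  (#|[set j : 'I_n | in_seg m k (nth 0%R s j)]%SET| <= 1)%N.
Proof.
rewrite leqNgt; apply/negP => /card_gt1P[i [j [+ + ij]]]; rewrite !finset.inE => iS jS.
have [lij|lji|/val_inj eij] := ltngtP i j.
- by have := no_collision k lij; rewrite iS jS.
- by have := no_collision k lji; rewrite iS jS.
- by move: ij; rewrite eij eqxx.
Qed.

Lemma Iseg_no_collision (k : 'I_(m * Lnat)) :
  Iseg m s E k = (\sum_(i < n) ((seg_of i == k) && Defs.isolated E i))%N :> nat.
Proof.
set S := [set j : 'I_n | in_seg m k (nth 0 s j)]%SET.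
have notS i : i \notin S -> (seg_of i == k) = false.
  by rewrite finset.inE in_seg_of => /negbTE.
rewrite /Iseg card_set_finset -/S.
have := seg_card_le1 k; rewrite -/S leq_eqVlt ltnS leqn0.
case/orP => [/[dup] S1 /cards1P[j0 Sj0]|/eqP S0]; last first.
  by rewrite S0 /= big1 // => i _; rewrite notS // (cards0_eq S0) finset.inE.
have j0S : j0 \in S by rewrite Sj0 set11.
rewrite S1 /= (bigD1 j0) //= big1 ?addn0 => [|i ij0]; last first.
  by rewrite notS // Sj0 finset.inE.
move: (j0S); rewrite finset.inE in_seg_of => /[dup] j0k ->; congr (nat_of_bool _).
apply/forallP/idP => [/(_ j0)|isoj j]; first by rewrite in_seg_of j0k.
apply/implyP; rewrite in_seg_of => jk.
have : j \in S by rewrite finset.inE in_seg_of.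
by rewrite Sj0 finset.inE => /eqP ->.
Qed.

Lemma Wml_Niso : Wml m Lnat s E = Niso s E.
Proof.
rewrite /Wml /Niso card_set_sum (eq_bigr _ (fun k _ => Iseg_no_collision k)).
rewrite exchange_big /=; apply: eq_bigr => i _.
rewrite (bigD1 (Ordinal (seg_of_lt i))) //= eqxx /= big1 ?addn0 // => k nk.
suff /negbTE -> : seg_of i != k by [].
by apply: contra nk => /eqP eki; apply/eqP/val_inj; rewrite /= eki.
Qed.

End segments.

Lemma sum_edge_weight (R : realType) (h : R -> R -> R) n (s : seq R) :
  \sum_(E in {set 'I_n * 'I_n} | E \subset upper n) edge_weight h s E = 1.
Proof.
pose hp (p : 'I_n * 'I_n) := h (nth 0 s p.1) (nth 0 s p.2).
pose F p := if p \in upper n then hp p else 0.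
pose G p := if p \in upper n then 1 - hp p else 1.
(* expand \prod_p (F p + G p) = 1; the terms choosing F outside [upper n] vanish *)
have := @bigA_distr R 0 1 *%R +%R _ F G.
rewrite big1 => [|p _]; last first.
  by rewrite /F /G; case: (p \in upper n); rewrite /= ?subrKC ?add0r.
move=> expand; apply: (etrans _ (esym expand)).
rewrite [RHS](bigID (fun J : {set _} => J \subset upper n)) /=.
rewrite [X in _ = _ + X]big1 ?addr0 => [|J nJ]; last first.
  have [p pJ pnU] := subsetPn nJ.
  by rewrite (bigD1 p) //= pJ /F (negbTE pnU) mul0r.
apply: eq_bigr => J JU.
rewrite (bigID (fun p => p \in upper n)) /= [X in _ * X]big1 ?mulr1 => [|p pnU]; last first.
  have pnJ : p \notin J by move: pnU; apply: contraNN; exact: (fintype.subsetP JU).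
  by rewrite (negbTE pnJ) /G (negbTE pnU).
by apply: eq_bigr => p pU; rewrite /F /G pU; case: (p \in J).
Qed.

Lemma leq_sq_exp3 n : (n * n <= 3 ^ n)%N.
Proof.
have lt_exp3 k : (k < 3 ^ k)%N by elim: k => [|k IH] //; rewrite expnS; lia.
by elim: n => [|n IH] //; have := lt_exp3 n; rewrite expnS; lia.
Qed.

Lemma exp_series_le (R : realType) (x : R) : 0 <= x ->
  (\sum_(0 <= n <oo) ((x ^+ n / n`!%:R)%:E) <= (expR x)%:E)%E.
Proof.
move=> x0; apply: lime_le.
  by apply: is_cvg_nneseries => n _ _; rewrite lee_fin divr_ge0 ?exprn_ge0.
apply: nearW => N; rewrite /= sumEFin lee_fin.
apply: (nondecreasing_cvgn_le _ (is_cvg_series_exp_coeff x)).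
by apply: nondecreasing_series => k _ _; exact: exp_coeff_ge0.
Qed.

Lemma fine_dist_le (R : realType) (P Q e : \bar R) (d : R) :
  (0 <= P)%E -> (0 <= Q)%E -> (0 <= e)%E -> (e <= d%:E)%E ->
  (P <= Q + e)%E -> (Q <= P + e)%E -> `|fine P - fine Q| <= d.
Proof.
case: e => [r| |]; case: P => [p| |]; case: Q => [q| |] //=; rewrite ?lee_fin //.
- by move=> p0 q0 r0 rd pq qp; rewrite ler_norml; apply/andP; split; lra.
- by move=> _ _ r0 rd _ _; rewrite subr0 normr0 (le_trans r0).
Qed.

Section collision_bound.
Context (R : realType) (Lnat : nat) (Lnat_gt0 : (0 < Lnat)%N) (h : R -> R -> R).
Hypothesis h01 : forall x y : R, 0 <= x < Lnat%:R -> 0 <= y < Lnat%:R -> 0 <= h x y <= 1.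
Context (m : nat) (m_gt0 : (0 < m)%N).
Local Notation L := (Lnat%:R : R).
Local Notation mu := (@lebesgue_measure R).

Let L_gt0 : 0 < L. Proof. by rewrite ltr0n. Qed.
Let L_ge1 : 1 <= L. Proof. by rewrite ler1n. Qed.

Definition seg (k : nat) : set R := `[(k%:R / m%:R), (k.+1%:R / m%:R)[%classic.

Let measurable_seg k : measurable (seg k). Proof. exact: measurable_itv. Qed.

Let mu_seg k : (mu (seg k) <= (m%:R^-1)%:E)%E.
Proof.
rewrite /seg lebesgue_measure_itv /= lte_fin.
case: ifP => _; last by rewrite lee_fin invr_ge0.
by rewrite -EFinD lee_fin -mulrBl -natr1 addrAC subrr add0r mul1r.
Qed.

Lemma indic_seg k x : \1_(seg k) x = (in_seg m k x)%:R :> R.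
Proof. by rewrite indicE /seg /in_seg mem_setE ?in_itv. Qed.

Lemma nth_in_torus s : in_torus L s -> forall i, 0 <= nth 0 s i < L.
Proof.
move=> ds i; have [ilt|ige] := ltnP i (size s); last by rewrite nth_default // lexx.
by move/(all_nthP 0): ds => /(_ i ilt).
Qed.

Lemma edge_weight_ge0 n s (E : {set 'I_n * 'I_n}) : in_torus L s -> 0 <= edge_weight h s E.
Proof.
move=> ds; apply: prodr_ge0 => p _.
have /andP[h0 h1] := h01 (nth_in_torus ds p.1) (nth_in_torus ds p.2).
by case: (p \in E); rewrite ?subr_ge0.
Qed.

Definition cond_prob n (ev : seq R -> {set 'I_n * 'I_n} -> bool) (s : seq R) : \bar R :=
  (\sum_(E in {set 'I_n * 'I_n} | E \subset upper n) edge_weight h s E * (ev s E)%:R)%:E.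

Lemma cond_prob_ge0 n ev s : in_torus L s -> (0 <= @cond_prob n ev s)%E.
Proof.
move=> ds; rewrite lee_fin; apply: sumr_ge0 => E _.
by apply: mulr_ge0; [exact: edge_weight_ge0 | case: (ev s E)].
Qed.

Lemma cond_prob_le1 n ev s : in_torus L s -> (@cond_prob n ev s <= 1)%E.
Proof.
move=> ds; rewrite lee_fin -[X in _ <= X](sum_edge_weight h n s); apply: ler_sum => E _.
by rewrite ler_piMr ?edge_weight_ge0 //; case: (ev s E).
Qed.

Definition collision n (s : seq R) : bool :=
  [exists t : 'I_n * 'I_n * 'I_(m * Lnat),
    [&& (t.1.1 < t.1.2)%N, in_seg m t.2 (nth 0 s t.1.1) & in_seg m t.2 (nth 0 s t.1.2)]].

Definition collision_indic n (t : 'I_n * 'I_n * 'I_(m * Lnat)) (s : seq R) : R :=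
  \1_(seg t.2) (nth 0 s t.1.1) * \1_(seg t.2) (nth 0 s t.1.2).

Definition collision_triples n : seq ('I_n * 'I_n * 'I_(m * Lnat)) :=
  [seq t : 'I_n * 'I_n * 'I_(m * Lnat) <- index_enum _ | (t.1.1 < t.1.2)%N].

Lemma collision_indic_ge0 n t s : 0 <= @collision_indic n t s.
Proof. by rewrite /collision_indic !indic_seg mulr_ge0. Qed.

Lemma collision_le_sum n s :
  collision n s -> 1 <= \sum_(t <- collision_triples n) collision_indic t s.
Proof.
move=> /existsP[t /and3P[lt i1 i2]].
rewrite big_filter (bigD1 t) //= /collision_indic !indic_seg i1 i2 mulr1 lerDl.
by apply: sumr_ge0 => u _; exact: collision_indic_ge0.
Qed.

Lemma Wml_Niso_no_collision n s (E : {set 'I_n * 'I_n}) :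
  in_torus L s -> ~~ collision n s -> Wml m Lnat s E = Niso s E.
Proof.
move=> ds nc; apply: Wml_Niso => // [j|i j k ij]; first exact: nth_in_torus.
by move/existsPn: nc => /(_ (i, j, k)) /=; rewrite ij.
Qed.

(* Off collisions the two conditional probabilities agree, and on collisions
   the first is at most 1, which the sum of collision indicators dominates. *)
Lemma iint_cond_prob_le n (ev1 ev2 : seq R -> {set 'I_n * 'I_n} -> bool) :
  (forall s E, in_torus L s -> ~~ collision n s -> ev1 s E = ev2 s E) ->
  (iint L n (cond_prob ev1) <= iint L n (cond_prob ev2) +
     \sum_(t <- collision_triples n) iint L n (fun s => (collision_indic t s)%:E))%E.
Proof.
move=> ev12.
pose F s := if collision n s then 0%E else cond_prob ev1 s.
have F0 s : in_torus L s -> (0 <= F s)%E.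
  by move=> ds; rewrite /F; case: ifP => // _; exact: cond_prob_ge0.
apply: (@le_trans _ _ (iint L n (fun s =>
    F s + (\sum_(t <- collision_triples n) collision_indic t s)%:E))).
  apply: iint_le => s ds; first exact: cond_prob_ge0.
  rewrite /F; case: ifPn => c.
    by rewrite add0e (le_trans (cond_prob_le1 _ ds)) // lee_fin collision_le_sum.
  by rewrite leeDl // lee_fin sumr_ge0 // => t _; exact: collision_indic_ge0.
apply: le_trans (iintD_sum_le _ _ _) _ => //.
- by move=> t s _; exact: collision_indic_ge0.
- move=> t; rewrite mem_filter => /andP[ij _].
  exact: iint_measurable_indic2.
apply: leeD => //; apply: iint_le => // s ds.
rewrite /F; case: ifPn => c; first exact: cond_prob_ge0.
rewrite le_eqVlt; apply/orP; left; apply/eqP; rewrite /cond_prob.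
by congr EFin; apply: eq_bigr => E _; rewrite ev12.
Qed.

(* P(N = n) times the density L^-n of n independent uniform points *)
Definition poisson_weight n : R := expR (- L) * L ^+ n / n`!%:R * L ^- n.

Lemma poisson_weight_ge0 n : 0 <= poisson_weight n.
Proof. by rewrite !mulr_ge0 ?invr_ge0 ?exprn_ge0 ?expR_ge0 // ltW. Qed.

Definition collision_mass n : R := (n * n * (m * Lnat))%:R * (m%:R^-1 * m%:R^-1 * L ^+ n).

Lemma collision_mass_ge0 n : 0 <= collision_mass n.
Proof. by rewrite !mulr_ge0 ?invr_ge0 ?exprn_ge0 // ltW. Qed.

Lemma iint_collision_le n :
  (\sum_(t <- collision_triples n) iint L n (fun s => (collision_indic t s)%:E) <=
   (collision_mass n)%:E)%E.
Proof.
pose c := m%:R^-1 * m%:R^-1 * L ^+ n.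
have c0 : 0 <= c by rewrite !mulr_ge0 ?invr_ge0 // exprn_ge0 // ltW.
rewrite big_filter.
apply: (@le_trans _ _ (\sum_(t : 'I_n * 'I_n * 'I_(m * Lnat) | (t.1.1 < t.1.2)%N) c%:E)).
  by apply: lee_sum => t ij; apply: (iint_indic2_le L_gt0) => //; rewrite invr_ge0.
rewrite sumEFin lee_fin (@le_trans _ _ (\sum_(t : 'I_n * 'I_n * 'I_(m * Lnat)) c)) //.
  rewrite [X in _ <= X](bigID (fun t : 'I_n * 'I_n * 'I_(m * Lnat) => (t.1.1 < t.1.2)%N)) /=.
  by rewrite lerDl sumr_ge0.
by rewrite sumr_const !card_prod !card_ord /collision_mass mulr_natl.
Qed.

Definition collision_error : \bar R :=
  (\sum_(0 <= n <oo) ((poisson_weight n)%:E * (collision_mass n)%:E))%E.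

Lemma model_prob_ge0 ev : (0 <= model_prob L h ev)%E.
Proof.
apply: nneseries_ge0 => n _ _; apply: mule_ge0.
  by rewrite lee_fin -/(poisson_weight n) poisson_weight_ge0.
exact: iint_ge0 (fun s ds => cond_prob_ge0 (ev n) ds).
Qed.

Lemma model_prob_le (ev1 ev2 : forall n, seq R -> {set 'I_n * 'I_n} -> bool) :
  (forall n s E, in_torus L s -> ~~ collision n s -> ev1 n s E = ev2 n s E) ->
  (model_prob L h ev1 <= model_prob L h ev2 + collision_error)%E.
Proof.
move=> ev12; have pw0 n : (0 <= (poisson_weight n)%:E)%E by rewrite lee_fin poisson_weight_ge0.
have iint0 n ev : (0 <= iint L n (@cond_prob n ev))%E.
  exact: iint_ge0 (fun s ds => cond_prob_ge0 ev ds).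
rewrite /model_prob /collision_error -nneseriesD; first last.
- by move=> n _ _; rewrite -EFinM lee_fin mulr_ge0 ?poisson_weight_ge0 ?collision_mass_ge0.
- by move=> n _ _; exact: mule_ge0 (pw0 n) (iint0 n (ev2 n)).
apply: lee_nneseries => [n _ _|n _]; first exact: mule_ge0 (pw0 n) (iint0 n (ev1 n)).
rewrite -/(poisson_weight n) -ge0_muleDr ?lee_fin ?collision_mass_ge0 //; last exact: iint0.
apply: lee_wpmul2l => //; apply: le_trans (iint_cond_prob_le (ev12 n)) _.
by rewrite leeD // iint_collision_le.
Qed.

Let collision_term_le n : poisson_weight n * collision_mass n <=
  (expR (- L) * L / m%:R) * ((3 * L) ^+ n / n`!%:R).
Proof.
have mn0 : m%:R != 0 :> R by rewrite pnatr_eq0 -lt0n.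
have Ln0 : L != 0 by rewrite gt_eqF.
have fn0 : n`!%:R != 0 :> R by rewrite pnatr_eq0 -lt0n fact_gt0.
have -> : poisson_weight n * collision_mass n =
    (expR (- L) * L / m%:R) * ((n * n)%:R * L ^+ n / n`!%:R).
  by rewrite /poisson_weight /collision_mass !natrM; field; rewrite fn0 mn0 expf_neq0.
apply: ler_wpM2l; first by rewrite !mulr_ge0 ?invr_ge0 ?expR_ge0 // ltW.
apply: ler_wpM2r; first by rewrite invr_ge0.
rewrite exprMn; apply: ler_wpM2r; first by rewrite exprn_ge0 // ltW.
by rewrite -natrX ler_nat leq_sq_exp3.
Qed.

Lemma collision_error_le : (collision_error <= (L * expR (2 * L) / m%:R)%:E)%E.
Proof.
have a0 : 0 <= expR (- L) * L / m%:R by rewrite !mulr_ge0 ?invr_ge0 ?expR_ge0 // ltW.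
have -> : L * expR (2 * L) / m%:R = (expR (- L) * L / m%:R) * expR (3 * L).
  by rewrite (_ : 2 * L = - L + 3 * L) ?expRD; ring.
apply: (@le_trans _ _ (\sum_(0 <= n <oo)
    ((expR (- L) * L / m%:R)%:E * ((3 * L) ^+ n / n`!%:R)%:E))%E).
  apply: lee_nneseries => [n _ _|n _].
    by rewrite -EFinM lee_fin mulr_ge0 ?poisson_weight_ge0 ?collision_mass_ge0.
  by rewrite -!EFinM lee_fin collision_term_le.
rewrite nneseriesZl => [|n _]; last by rewrite lee_fin divr_ge0 ?exprn_ge0 // mulr_ge0 // ltW.
rewrite [X in (_ <= X)%E]EFinM lee_wpmul2l ?lee_fin //.
by rewrite exp_series_le // mulr_ge0 // ltW.
Qed.

Lemma model_prob_dist_le (ev1 ev2 : forall n, seq R -> {set 'I_n * 'I_n} -> bool) :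
  (forall n s E, in_torus L s -> ~~ collision n s -> ev1 n s E = ev2 n s E) ->
  `|fine (model_prob L h ev1) - fine (model_prob L h ev2)| <= L * expR (2 * L) / m%:R.
Proof.
move=> ev12; apply: (fine_dist_le (e := collision_error)); rewrite ?model_prob_ge0 //.
- apply: nneseries_ge0 => n _ _.
  by rewrite -EFinM lee_fin mulr_ge0 ?poisson_weight_ge0 ?collision_mass_ge0.
- exact: collision_error_le.
- exact: model_prob_le.
- by apply: model_prob_le => n s E ds nc; rewrite ev12.
Qed.

End collision_bound.

Lemma dTV_nat_le (R : realType) (P Q : set nat -> \bar R) (d : R) :
  (forall A, `|fine (P A) - fine (Q A)| <= d) -> 0 <= dTV_nat P Q <= d.
Proof.
move=> PQd; set S := [set `|fine (P A) - fine (Q A)| | A in [set: set nat]].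
have S0 : S (`|fine (P setT) - fine (Q setT)|) by exists setT.
have Sd : ubound S d by move=> _ [A _ <-].
apply/andP; split; last by apply: ge_sup => //; exists (`|fine (P setT) - fine (Q setT)|).
by apply: le_trans (sup_upper_bound (conj (ex_intro _ _ S0) (ex_intro _ d Sd)) S0).
Qed.

Lemma htilde_01 (R : realType) (H : R -> R) (tau alpha L : R) :
  (forall x, 0 <= x -> 0 <= H x <= 1) -> 0 < RL H tau L ->
  forall x y, 0 <= x < L -> 0 <= y < L -> 0 <= htilde H tau alpha L x y <= 1.
Proof.
move=> H01 RL0 x y /andP[x0 xL] /andP[y0 yL].
have rho0 : 0 <= rhoL L x y / RL H tau L.
  apply: divr_ge0; last exact: ltW.
  have : `|x - y| <= L by rewrite ler_norml; apply/andP; split; lra.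
  by rewrite /rhoL le_min normr_ge0 subr_ge0.
have /andP[H0 H1] := H01 _ rho0.
by rewrite /htilde; case: ifP => _; rewrite ?mulr1 ?mulr0 ?lexx //; apply/andP.
Qed.

Theorem lemma2 (R : realType) (H : R -> R) (tau alpha : R) (L : nat)
  (HmeasH : measurable_fun (`[0%R, +oo[%classic : set R) H)
  (HH01 : forall x : R, 0 <= x -> 0 <= H x <= 1)
  (HH1fin : (\int[@lebesgue_measure R]_(x in `[0%R, +oo[%classic) (H x)%:E < +oo)%E)
  (HH2 : (\int[@lebesgue_measure R]_(x in `[0%R, +oo[%classic) ((H x) ^+ 2)%:E
           < \int[@lebesgue_measure R]_(x in `[0%R, +oo[%classic) (H x)%:E)%E)
  (Htau : 0 < tau) (Halpha : 0 < alpha) (HL : (0 < L)%N)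
  (HRL : 0 < RL H tau L%:R) :
  let h := htilde H tau alpha L%:R in
  (fun m : nat =>
     dTV_nat
       (fun A : set nat => model_prob L%:R h (fun n s E => Niso s E \in A))
       (fun A : set nat => model_prob L%:R h (fun n s E => Wml m L s E \in A)))
  @ \oo --> 0.
Proof.
(* For fixed L only 0 <= h <= 1 matters. *)
move=> h; have h01 := htilde_01 alpha HH01 HRL.
pose K : R := L%:R * expR (2 * L%:R).
rewrite -cvg_shiftS; apply: (@squeeze_cvgr _ _ _ _ (cst 0) (fun m => K * harmonic m)).
- apply: nearW => m; apply: dTV_nat_le => A.
  apply: (model_prob_dist_le HL h01) => // n s E ds nc.
  by rewrite (Wml_Niso_no_collision HL).
- exact: cvg_cst.
- by rewrite -(mulr0 K); apply: cvgMl_tmp; exact: cvg_harmonic.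
Qed.
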